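(* Let $K\ge2$, $s\in(0,1)$, $q_1\ge\cdots\ge q_K>0$ with $\sum_{i=1}^Kq_i+s=1$. Let $\alpha_i=\log_{q_1}q_i$, let $R_0>1$ be the unique positive root of $\sum_{i=1}^KX^{-\alpha_i}=1$, let $-\beta=\log q_1/\log R_0$, and let $\overline{\mu}_K=\frac1K\sum_{i=1}^K\log_Kq_i$. Then $\overline{\mu}_K\le-\beta$, with equality when $q_1=\cdots=q_K$.
   Context: $-\beta$ is the exponent of the power law $B_r\approx r^{-\beta}$ for ranked word base values in the monkey-at-the-typewriter model with letter probabilities $q_i$ and space probability $s$. $\log_K$ denotes logarithm to base $K$. *)

From Stdlib Require Import Reals Lra Lia.
Open Scope R_scope.

Definition logb (b x : R) : R := ln x / ln b.

(* finite sum over indices i = 0, ..., K-1 (the paper's indices 1..K, shifted) *)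
Definition sumK (K : nat) (f : nat -> R) : R := sum_f_R0 f (K - 1).

(** Writing [L = ln R0] and [a = ln q_1 < 0], the root equation says that the
    numbers [R0^(-α_i) = exp (-(L/a) ln q_i)] average to [1/K].  By convexity of
    [exp] (Jensen, or AM-GM), [exp] of their mean exponent is at most [1/K], i.e.
    [(L/(-a)) * mean_i ln q_i <= - ln K]; dividing by [L ln K > 0] turns this
    into [mean_i log_K q_i <= a / L = -β].  When all [q_i] are equal, every
    [α_i = 1], so [R0 = K] and both sides equal [log_K q_1]. *)

From Stdlib Require Import Reals Lra Lia.
Open Scope R_scope.

Lemma exp_le_inv (u v : R) : exp u <= exp v -> u <= v.
Proof.
  intros H; destruct (Rle_or_lt u v) as [Hle | Hlt]; [exact Hle|].
  apply exp_increasing in Hlt; lra.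
Qed.

(* [sumK 0 f] is [f 0], not [0], because [0 - 1 = 0] in [nat]; hence [1 <= K]. *)
Section SumK.

Variable K : nat.
Hypothesis HK : (1 <= K)%nat.

Lemma sumK_ext (f g : nat -> R) :
  (forall i, (i < K)%nat -> f i = g i) -> sumK K f = sumK K g.
Proof. intros H; apply sum_eq; intros i Hi; apply H; lia. Qed.

Lemma sumK_le (f g : nat -> R) :
  (forall i, (i < K)%nat -> f i <= g i) -> sumK K f <= sumK K g.
Proof. intros H; apply sum_Rle; intros i Hi; apply H; lia. Qed.

Lemma sumK_const (c : R) : sumK K (fun _ => c) = INR K * c.
Proof.
  unfold sumK; rewrite sum_cte.
  replace (S (K - 1)) with K by lia; ring.
Qed.

Lemma sumK_scal_l (c : R) (f : nat -> R) :
  sumK K (fun i => c * f i) = c * sumK K f.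
Proof. unfold sumK; rewrite scal_sum; apply sum_eq; intros; ring. Qed.

Lemma sumK_div (c : R) (f : nat -> R) :
  sumK K (fun i => f i / c) = sumK K f / c.
Proof.
  unfold Rdiv; rewrite Rmult_comm, <- sumK_scal_l.
  apply sum_eq; intros; ring.
Qed.

Lemma sumK_plus (f g : nat -> R) :
  sumK K (fun i => f i + g i) = sumK K f + sumK K g.
Proof. apply sum_plus. Qed.

Lemma sumK_ge_first (f : nat -> R) :
  (forall i, (i < K)%nat -> 0 <= f i) -> f 0%nat <= sumK K f.
Proof.
  unfold sumK; intros H.
  assert (Hf : forall i, (i <= K - 1)%nat -> 0 <= f i) by (intros; apply H; lia).
  clear H; generalize dependent (K - 1)%nat; intros N.
  induction N as [|N IH]; intros Hf; simpl; [lra|].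
  assert (0 <= f (S N)) by (apply Hf; lia).
  assert (f 0%nat <= sum_f_R0 f N) by (apply IH; intros; apply Hf; lia).
  lra.
Qed.

(* Tangent line of [exp] at the mean [m]: [exp x >= exp m * (1 + (x - m))]. *)
Lemma exp_mean_le_mean_exp (f : nat -> R) :
  exp (sumK K f / INR K) <= sumK K (fun i => exp (f i)) / INR K.
Proof.
  assert (HKpos : 0 < INR K) by (apply lt_0_INR; lia).
  set (m := sumK K f / INR K).
  assert (Htangent : forall i, exp m * (1 + (f i - m)) <= exp (f i)).
  { intros i; replace (f i) with (m + (f i - m)) at 2 by ring.
    rewrite exp_plus; apply Rmult_le_compat_l;
      [left; apply exp_pos | apply exp_ineq1_le]. }
  assert (Hsum : sumK K (fun i => exp m * (1 + (f i - m))) = exp m * INR K).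
  { rewrite sumK_scal_l, (sumK_ext _ (fun i => f i + (1 - m))) by (intros; ring).
    rewrite sumK_plus, sumK_const; unfold m; field; lra. }
  apply (Rmult_le_reg_r (INR K)); [exact HKpos|].
  replace (sumK K (fun i => exp (f i)) / INR K * INR K)
    with (sumK K (fun i => exp (f i))) by (field; lra).
  rewrite <- Hsum; apply sumK_le; intros; apply Htangent.
Qed.

Lemma ln_le_mean_exponent (x : R) (e : nat -> R) :
  0 < x -> sumK K (fun i => Rpower x (- e i)) = 1 ->
  ln (INR K) <= ln x * (sumK K e / INR K).
Proof.
  intros Hx Hroot.
  assert (HKpos : 0 < INR K) by (apply lt_0_INR; lia).
  assert (Hjensen : exp (sumK K (fun i => - e i * ln x) / INR K) <= 1 / INR K).
  { rewrite <- Hroot; exact (exp_mean_le_mean_exp (fun i => - e i * ln x)). }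
  rewrite (sumK_ext _ (fun i => - ln x * e i)), sumK_scal_l in Hjensen
    by (intros; ring).
  replace (1 / INR K) with (exp (- ln (INR K))) in Hjensen
    by (rewrite exp_Ropp, exp_ln by exact HKpos; field; lra).
  apply exp_le_inv in Hjensen.
  replace (- ln x * sumK K e / INR K) with (- (ln x * (sumK K e / INR K)))
    in Hjensen by (field; lra).
  lra.
Qed.

Lemma root_sumK_Rpower_opp1 (x : R) :
  0 < x -> sumK K (fun _ => Rpower x (Ropp 1)) = 1 -> x = INR K.
Proof.
  intros Hx Hroot.
  rewrite sumK_const, Rpower_Ropp, Rpower_1 in Hroot by exact Hx.
  apply (Rmult_eq_reg_r (/ x)); [| apply Rinv_neq_0_compat; lra].
  rewrite Rinv_r by lra; symmetry; exact Hroot.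
Qed.

End SumK.

Lemma ln_neg (x : R) : 0 < x < 1 -> ln x < 0.
Proof. intros Hx; rewrite <- ln_1; apply ln_increasing; lra. Qed.

Lemma ln_nonpos (x : R) : 0 < x <= 1 -> ln x <= 0.
Proof.
  intros [Hx [Hlt | ->]]; [left; apply ln_neg; lra | rewrite ln_1; lra].
Qed.

Lemma logb_nonneg (b x : R) : 0 < b < 1 -> 0 < x <= 1 -> 0 <= logb b x.
Proof.
  intros Hb Hx; unfold logb, Rdiv.
  assert (ln b < 0) by (apply ln_neg; exact Hb).
  assert (ln x <= 0) by (apply ln_nonpos; exact Hx).
  replace (ln x * / ln b) with (- ln x * / - ln b) by (field; lra).
  apply Rmult_le_pos; [lra | left; apply Rinv_0_lt_compat; lra].
Qed.

Lemma Rpower_opp_ge_1 (x e : R) : 0 < x <= 1 -> 0 <= e -> 1 <= Rpower x (- e).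
Proof.
  intros Hx He; unfold Rpower.
  assert (ln x <= 0) by (apply ln_nonpos; exact Hx).
  eapply Rle_trans; [| apply exp_ineq1_le]; nra.
Qed.

(* If [x <= 1], every term [x^(-e_i)] is at least [1]. *)
Lemma one_lt_root_sumK_Rpower (K : nat) (x : R) (e : nat -> R) :
  (2 <= K)%nat -> 0 < x -> (forall i, (i < K)%nat -> 0 <= e i) ->
  sumK K (fun i => Rpower x (- e i)) = 1 -> 1 < x.
Proof.
  intros HK Hx He Hroot.
  destruct (Rlt_or_le 1 x) as [Hgt | Hle]; [exact Hgt | exfalso].
  assert (Hsum : sumK K (fun _ => 1) <= sumK K (fun i => Rpower x (- e i))).
  { apply sumK_le; [lia|]; intros i Hi; apply Rpower_opp_ge_1; auto with real. }
  rewrite sumK_const in Hsum by lia.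
  assert (2 <= INR K) by (change 2 with (INR 2); apply le_INR; exact HK).
  lra.
Qed.

(* [a / L - S / (K ln K) = a (ln K - L S / (a K)) / (L ln K)], a product of signs. *)
Lemma mean_logK_le_of_mean_exponent (K : nat) (S a x : R) :
  (2 <= K)%nat -> a < 0 -> 1 < x ->
  ln (INR K) <= ln x * (S / a / INR K) -> / INR K * (S / ln (INR K)) <= a / ln x.
Proof.
  intros HK Ha Hx Hmean.
  assert (HKgt1 : 1 < INR K) by (apply lt_1_INR; lia).
  assert (HlnK : 0 < ln (INR K)) by (rewrite <- ln_1; apply ln_increasing; lra).
  assert (HL : 0 < ln x) by (rewrite <- ln_1; apply ln_increasing; lra).
  assert (Hdiff : a / ln x - / INR K * (S / ln (INR K))
                  = a * (ln (INR K) - ln x * (S / a / INR K)) * / (ln x * ln (INR K)))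
    by (field; lra).
  assert (0 <= a * (ln (INR K) - ln x * (S / a / INR K)) * / (ln x * ln (INR K))).
  { apply Rle_mult_inv_pos; [nra | apply Rmult_lt_0_compat; lra]. }
  lra.
Qed.

Theorem proposition1 (K : nat) (s : R) (q : nat -> R) (R0 : R)
  (HK : (2 <= K)%nat)
  (Hs : 0 < s < 1)
  (Hdec : forall i j : nat, (i <= j)%nat -> (j < K)%nat -> q j <= q i)
  (Hpos : forall i : nat, (i < K)%nat -> 0 < q i)
  (Hsum : sumK K q + s = 1)
  (HR0pos : 0 < R0)
  (HR0root : sumK K (fun i => Rpower R0 (- logb (q 0%nat) (q i))) = 1) :
  let minus_beta := ln (q 0%nat) / ln R0 in
  let mu := / INR K * sumK K (fun i => logb (INR K) (q i)) in
  mu <= minus_beta /\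
  ((forall i : nat, (i < K)%nat -> q i = q 0%nat) -> mu = minus_beta).
Proof.
  intros minus_beta mu; unfold minus_beta, mu; clear minus_beta mu.
  assert (HK1 : (1 <= K)%nat) by lia.
  assert (HlnK : 0 < ln (INR K)).
  { rewrite <- ln_1; apply ln_increasing; [lra | apply lt_1_INR; lia]. }
  assert (Hq0 : 0 < q 0%nat < 1).
  { split; [apply Hpos; lia|].
    assert (q 0%nat <= sumK K q) by (apply sumK_ge_first; auto with real).
    lra. }
  assert (Ha : ln (q 0%nat) < 0) by (apply ln_neg; exact Hq0).
  change (sumK K (fun i => logb (INR K) (q i)))
    with (sumK K (fun i => ln (q i) / ln (INR K))).
  rewrite sumK_div.
  split.
  - assert (HR0 : 1 < R0).
    { refine (one_lt_root_sumK_Rpower K R0 (fun i => logb (q 0%nat) (q i))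
                HK HR0pos _ HR0root).
      intros i Hi; apply logb_nonneg; [exact Hq0|].
      assert (q i <= q 0%nat) by (apply Hdec; lia).
      split; [apply Hpos; exact Hi | lra]. }
    assert (Hmean := ln_le_mean_exponent K HK1 R0
                      (fun i => logb (q 0%nat) (q i)) HR0pos HR0root).
    unfold logb in Hmean; rewrite sumK_div in Hmean.
    apply mean_logK_le_of_mean_exponent; assumption.
  - intros Heq.
    assert (HR0K : R0 = INR K).
    { apply (root_sumK_Rpower_opp1 K HK1 R0 HR0pos).
      etransitivity; [| exact HR0root].
      apply sumK_ext; [exact HK1|]; intros i Hi.
      rewrite (Heq i Hi); unfold logb.
      f_equal; field; lra. }
    rewrite (sumK_ext K HK1 _ (fun _ => ln (q 0%nat))), sumK_const
      by (exact HK1 || (intros i Hi; rewrite (Heq i Hi); reflexivity)).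
    rewrite HR0K; field; lra.
Qed.
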